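(* Let $G'\le G''$ be finite abelian groups and let $k$ be a positive integer dividing $|G'|$. If $L$ is a subgroup of $G''$ with $[G'':L]=k$, then there exists a subgroup $K$ of $G'$ with $[G':K]=k$ and $K\subset L$. *)

From mathcomp Require Import all_boot all_fingroup.

From mathcomp Require Import all_boot all_fingroup.
From mathcomp Require Import all_solvable.
Set Implicit Arguments.
Unset Strict Implicit.
Unset Printing Implicit Defensive.
Local Open Scope group_scope.

(* A finite abelian group has a subgroup of every order dividing its own
   (peel off a cyclic subgroup of prime order with Cauchy's theorem and lift
   from the quotient).  Intersecting G' with L then yields a subgroup of
   G' of index [G' : L], which divides [G'' : L] = k; inside it one picks a
   subgroup of order |G'| / k. *)

Lemma card_inv_quotient (gT : finGroupType) (H X : {group gT})
    (Kb : {group coset_of X}) :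
  X <| H -> Kb \subset H / X ->
  exists2 K : {group gT}, K \subset H & #|K| = (#|Kb| * #|X|)%N.
Proof.
move=> nsXH sKbH; have [K defKb sXK sKH] := inv_quotientS nsXH sKbH.
exists K => //; rewrite defKb card_quotient; first by rewrite mulnC Lagrange.
exact: subset_trans sKH (normal_norm nsXH).
Qed.

Lemma abelian_subgroup_of_order (gT : finGroupType) (H : {group gT}) n :
  abelian H -> (n %| #|H|)%N -> exists2 K : {group gT}, K \subset H & #|K| = n.
Proof.
elim/ltn_ind: n gT H => n IHn gT H cHH n_dvd_H.
have n_gt0 : (0 < n)%N by apply: dvdn_gt0 n_dvd_H.
have [n_le1 | n_gt1] := leqP n 1.
  by exists 1%G; rewrite ?sub1G // cards1; apply/anti_leq/andP.
have p_pr := pdiv_prime n_gt1; have p_dvd_n := pdiv_dvd n.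
set p := pdiv n in p_pr p_dvd_n.
have p_dvd_H := dvdn_trans p_dvd_n n_dvd_H.
have [x Hx ox] := Cauchy p_pr p_dvd_H.
set X := <[x]>%G; have oX : #|X| = p := ox.
have sXH : X \subset H by rewrite cycle_subG.
have nsXH : X <| H by rewrite /normal sXH sub_abelian_norm.
have [Kb sKbH oKb] : exists2 Kb : {group coset_of X},
    Kb \subset H / X & #|Kb| = n %/ p.
  apply: IHn; first by rewrite ltn_Pdiv ?prime_gt1.
    exact: quotient_abelian.
  rewrite card_quotient ?normal_norm // -divgS // oX.
  by rewrite dvdn_divRL // divnK.
have [K sKH oK] := card_inv_quotient nsXH sKbH.
by exists K; rewrite // oK oKb oX (divnK p_dvd_n).
Qed.

Lemma indexSg_norm (gT : finGroupType) (G H L : {group gT}) :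
  G \subset H -> H \subset 'N(L) -> (#|G : L| %| #|H : L|)%N.
Proof.
move=> sGH nLH; rewrite -!card_quotient ?(subset_trans sGH) //.
exact/cardSg/quotientS.
Qed.

Lemma abelian_subgroup_of_index (gT : finGroupType) (G H : {group gT}) k :
  H \subset G -> abelian H -> (#|G : H| %| k)%N -> (k %| #|G|)%N ->
  exists2 K : {group gT}, K \subset H & #|G : K| = k.
Proof.
move=> sHG cHH iH_dvd_k k_dvd_G.
have : (#|G| %/ k %| #|H|)%N.
  have iH_dvd_G := dvdn_trans iH_dvd_k k_dvd_G.
  rewrite -(divg_indexS sHG) -(divnK iH_dvd_k) mulnC divnMA; apply: dvdn_div.
  by rewrite dvdn_divRL // divnK.
case/(abelian_subgroup_of_order cHH) => K sKH oK.
exists K => //; rewrite -divgS ?(subset_trans sKH) // oK divnA //.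
by rewrite mulKn ?cardG_gt0.
Qed.

Theorem lemma2 (gT : finGroupType) (G1 G2 L : {group gT}) (k : nat) :
  abelian G2 -> G1 \subset G2 ->
  0 < k -> (k %| #|G1|)%N ->
  L \subset G2 -> #|G2 : L| = k ->
  exists K : {group gT}, [/\ K \subset G1, #|G1 : K| = k & K \subset L].
Proof.
move=> cG2G2 sG12 _ k_dvd_G1 sLG2 iL.
have sG2_NL : G2 \subset 'N(L) by rewrite sub_abelian_norm.
have iG1L_dvd_k : (#|G1 : G1 :&: L| %| k)%N.
  by rewrite indexgI -iL indexSg_norm.
have cG1L : abelian (G1 :&: L) by apply: abelianS cG2G2; rewrite subIset ?sG12.
have [K /subsetIP[sKG1 sKL] iK] :=
  abelian_subgroup_of_index (subsetIl G1 L) cG1L iG1L_dvd_k k_dvd_G1.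
by exists K.
Qed.
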